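(* Let $T:X\rightrightarrows X^*$ be a pseudomonotone operator. Then $T$ is $D$-maximal pseudomonotone if and only if $\widehat{T}=(\widehat{T})^\rho_D$, i.e. $\widehat T$ coincides with the restriction of $(\widehat T)^\rho$ to $\mathrm{dom}(\widehat T)=\mathrm{dom}(T)$.
   Context: $X$ is a real Banach space with dual $X^*$ and pairing $\langle x,x^*\rangle=x^*(x)$. A multivalued operator $T:X\rightrightarrows X^*$ is identified with its graph $T\subset X\times X^*$; $T(x)=\{x^*:(x,x^* )\in T\}$, $\mathrm{dom}(T)=\{x:T(x)\ne\emptyset\}$, $Z_T=\{x:0\in T(x)\}$. For $A\subset X^*$, $\operatorname{cone}(A)=\{tv:t\ge0,v\in A\}$ and $\operatorname{cone}_\circ(A)=\{tv:t>0,v\in A\}$. For $C\subset X$, $N_C(x)=\{x^*: \langle y-x,x^*\rangle\le0\ \forall y\in C\}$. For $(x,x^* ),(y,y^* )\in X\times X^*$, write $(x,x^* )\sim_p(y,y^* )$ if either $\min\{\langle x-y,y^*\rangle,\langle y-x,x^*\rangle\}<0$ or $\langle x-y,y^*\rangle=\langle y-x,x^*\rangle=0$. The pseudomonotone polar is $T^\rho=\{(x,x^* ): (x,x^* )\sim_p(y,y^* )\ \forall (y,y^* )\in T\}$, and $T^\rho_D$ denotes the restriction of $T^\rho$ to $\mathrm{dom}(T)$ (i.e. $T^\rho_D(x)=T^\rho(x)$ if $x\in\mathrm{dom}(T)$, $\emptyset$ otherwise). $T$ is pseudomonotone if for all $(x,x^* ),(y,y^* )\in T$, $\langle y-x,x^*\rangle\ge0$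 implies $\langle y-x,y^*\rangle\ge0$. Two operators $T,S$ are equivalent if $\mathrm{dom}(T)=\mathrm{dom}(S)$, $Z_T=Z_S$ and $\operatorname{cone}(T(x))=\operatorname{cone}(S(x))$ for all $x\in\mathrm{dom}(T)\setminus Z_T$. $T$ is $D$-maximal pseudomonotone if $T$ is pseudomonotone and there is a pseudomonotone operator $S$ equivalent to $T$ which has no proper pseudomonotone extension with the same domain. For pseudomonotone $T$ and $x\in Z_T$, let $L(T,x)=\{y\in X:\exists y^*\in T(y),\ \langle x-y,y^*\rangle\ge0\}$, and define $\widehat T(x)=N_{L(T,x)}(x)$ if $x\in Z_T$, $\widehat T(x)=\operatorname{cone}_\circ(T(x))$ if $x\in\mathrm{dom}(T)\setminus Z_T$, and $\widehat T(x)=\emptyset$ if $x\notin\mathrm{dom}(T)$. (It is known, due to Hadjisavvas, that $\widehat T$ is pseudomonotone, equivalent to $T$, and is the largest pseudomonotone operator equivalent to $T$.) *)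

From Stdlib Require Import Reals.
Open Scope R_scope.

Record Banach := {
  vec :> Type;
  vzero : vec;
  vadd : vec -> vec -> vec;
  vopp : vec -> vec;
  vscal : R -> vec -> vec;
  vnorm : vec -> R;
  vadd_assoc : forall x y z, vadd x (vadd y z) = vadd (vadd x y) z;
  vadd_comm : forall x y, vadd x y = vadd y x;
  vadd_zero : forall x, vadd x vzero = x;
  vadd_opp : forall x, vadd x (vopp x) = vzero;
  vscal_assoc : forall a b x, vscal a (vscal b x) = vscal (a * b) x;
  vscal_one : forall x, vscal 1 x = x;
  vscal_distr_l : forall a x y, vscal a (vadd x y) = vadd (vscal a x) (vscal a y);
  vscal_distr_r : forall a b x, vscal (a + b) x = vadd (vscal a x) (vscal b x);
  vnorm_eq0 : forall x, vnorm x = 0 -> x = vzero;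
  vnorm_triangle : forall x y, vnorm (vadd x y) <= vnorm x + vnorm y;
  vnorm_scal : forall a x, vnorm (vscal a x) = Rabs a * vnorm x;
  vcomplete : forall u : nat -> vec,
    (forall eps, 0 < eps -> exists N, forall m n, (N <= m)%nat -> (N <= n)%nat ->
        vnorm (vadd (u m) (vopp (u n))) < eps) ->
    exists l, forall eps, 0 < eps -> exists N, forall n, (N <= n)%nat ->
        vnorm (vadd (u n) (vopp l)) < eps
}.

Definition vsub {X : Banach} (x y : X) : X := vadd X x (vopp X y).

Definition dual (X : Banach) : Type :=
  { f : X -> R |
    (forall x y, f (vadd X x y) = f x + f y) /\
    (forall a x, f (vscal X a x) = a * f x) /\
    (exists M, forall x, Rabs (f x) <= M * vnorm X x) }.

Definition pair {X : Banach} (x : X) (xs : dual X) : R := proj1_sig xs x.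

(** Multivalued operators identified with their graphs. *)
Definition op (X : Banach) := X -> dual X -> Prop.

Definition op_eq {X : Banach} (T S : op X) : Prop :=
  forall x xs, T x xs <-> S x xs.
Definition op_sub {X : Banach} (T S : op X) : Prop :=
  forall x xs, T x xs -> S x xs.

Definition dom {X : Banach} (T : op X) (x : X) : Prop := exists xs, T x xs.

Definition is_zero_dual {X : Banach} (xs : dual X) : Prop :=
  forall y : X, pair y xs = 0.

Definition zeros {X : Banach} (T : op X) (x : X) : Prop :=
  exists xs, T x xs /\ is_zero_dual xs.

(** cone(A) = {t v : t >= 0, v ∈ A}  (equality in X^* is pointwise) *)
Definition cone {X : Banach} (A : dual X -> Prop) (ys : dual X) : Prop :=
  exists t v, 0 <= t /\ A v /\ forall z, pair z ys = t * pair z v.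
Definition cone_pos {X : Banach} (A : dual X -> Prop) (ys : dual X) : Prop :=
  exists t v, 0 < t /\ A v /\ forall z, pair z ys = t * pair z v.

Definition normal_cone {X : Banach} (C : X -> Prop) (x : X) (xs : dual X) : Prop :=
  forall y, C y -> pair (vsub y x) xs <= 0.

Definition sim_p {X : Banach} (x : X) (xs : dual X) (y : X) (ys : dual X) : Prop :=
  Rmin (pair (vsub x y) ys) (pair (vsub y x) xs) < 0 \/
  (pair (vsub x y) ys = 0 /\ pair (vsub y x) xs = 0).

Definition polar {X : Banach} (T : op X) : op X :=
  fun x xs => forall y ys, T y ys -> sim_p x xs y ys.
Definition polar_D {X : Banach} (T : op X) : op X :=
  fun x xs => dom T x /\ polar T x xs.

Definition pseudomonotone {X : Banach} (T : op X) : Prop :=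
  forall x xs y ys, T x xs -> T y ys ->
    0 <= pair (vsub y x) xs -> 0 <= pair (vsub y x) ys.

Definition equivalent {X : Banach} (T S : op X) : Prop :=
  (forall x, dom T x <-> dom S x) /\
  (forall x, zeros T x <-> zeros S x) /\
  (forall x, dom T x -> ~ zeros T x ->
     forall ys, cone (T x) ys <-> cone (S x) ys).

Definition no_proper_pm_ext_same_dom {X : Banach} (S : op X) : Prop :=
  forall S', pseudomonotone S' -> op_sub S S' ->
    (forall x, dom S' x <-> dom S x) -> op_sub S' S.

Definition D_maximal_pseudomonotone {X : Banach} (T : op X) : Prop :=
  pseudomonotone T /\
  exists S, pseudomonotone S /\ equivalent T S /\ no_proper_pm_ext_same_dom S.

Definition Lset {X : Banach} (T : op X) (x : X) (y : X) : Prop :=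
  exists ys, T y ys /\ 0 <= pair (vsub x y) ys.

Definition hat {X : Banach} (T : op X) : op X :=
  fun x xs =>
    (zeros T x /\ normal_cone (Lset T x) x xs) \/
    (dom T x /\ ~ zeros T x /\ cone_pos (T x) xs).

(* Hadjisavvas' operator [hat T] is the largest pseudomonotone operator
   equivalent to [T], and the pseudomonotone operators equivalent to [T] are
   exactly its pseudomonotone suboperators.  So [T] is D-maximal iff [hat T]
   itself admits no proper pseudomonotone extension with the same domain.
   For a pseudomonotone [S], a pair [(x, x* )] with [x] in [dom S] can be added
   to [S] without losing pseudomonotonicity iff it lies in the polar of [S];
   hence [S] has no such extension iff [polar_D S] is contained in [S], and the
   reverse inclusion holds for every pseudomonotone operator. *)

From Stdlib Require Import Reals Lra Psatz Classical.
Open Scope R_scope.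

Lemma vsub_add_vsub (X : Banach) (x y : X) : vadd X (vsub x y) (vsub y x) = vzero X.
Proof.
  unfold vsub. rewrite vadd_assoc, <- (vadd_assoc X x (vopp X y) y).
  rewrite (vadd_comm X (vopp X y) y), vadd_opp, vadd_zero, vadd_opp.
  reflexivity.
Qed.

Lemma pair_vzero (X : Banach) (f : dual X) : pair (vzero X) f = 0.
Proof.
  destruct f as [g [g_add g_rest]]; unfold pair; simpl.
  pose proof (g_add (vzero X) (vzero X)) as H.
  rewrite vadd_zero in H. lra.
Qed.

Lemma pair_vsubC (X : Banach) (x y : X) (f : dual X) :
  pair (vsub x y) f = - pair (vsub y x) f.
Proof.
  pose proof (pair_vzero X f) as H0. rewrite <- (vsub_add_vsub X x y) in H0.
  destruct f as [g [g_add g_rest]]; unfold pair in *; simpl in *.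
  rewrite g_add in H0. lra.
Qed.

Lemma pair_vsubxx (X : Banach) (x : X) (f : dual X) : pair (vsub x x) f = 0.
Proof. unfold vsub. rewrite vadd_opp. apply pair_vzero. Qed.

Lemma sim_p_sym (X : Banach) (x : X) xs y ys : sim_p x xs y ys -> sim_p y ys x xs.
Proof. unfold sim_p. rewrite Rmin_comm. tauto. Qed.

Lemma sim_p_refl (X : Banach) (x : X) xs : sim_p x xs x xs.
Proof. right. rewrite pair_vsubxx. split; reflexivity. Qed.

Lemma pseudomonotone_sim_p (X : Banach) (T : op X) :
  pseudomonotone T <-> forall x xs y ys, T x xs -> T y ys -> sim_p x xs y ys.
Proof.
  split.
  - intros pmT x xs y ys Tx Ty.
    pose proof (pmT x xs y ys Tx Ty) as Hxy.
    pose proof (pmT y ys x xs Ty Tx) as Hyx.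
    rewrite (pair_vsubC X y x ys) in Hxy. rewrite (pair_vsubC X x y xs) in Hyx.
    destruct (Rlt_or_le (pair (vsub x y) ys) 0) as [Hyx'|Hyx'].
    + left. eapply Rle_lt_trans; [apply Rmin_l|exact Hyx'].
    + destruct (Rlt_or_le (pair (vsub y x) xs) 0) as [Hxy'|Hxy'].
      * left. eapply Rle_lt_trans; [apply Rmin_r|exact Hxy'].
      * right. specialize (Hxy Hxy'). specialize (Hyx Hyx'). lra.
  - intros Hsim x xs y ys Tx Ty Hx.
    destruct (Rlt_or_le (pair (vsub y x) ys) 0) as [Hy|Hy]; [exfalso|exact Hy].
    specialize (Hsim x xs y ys Tx Ty). unfold sim_p in Hsim.
    rewrite (pair_vsubC X x y ys) in Hsim.
    destruct Hsim as [Hsim|Hsim]; [unfold Rmin in Hsim; destruct (Rle_dec _ _)|]; lra.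
Qed.

Lemma polar_antitone (X : Banach) (S T : op X) :
  op_sub S T -> op_sub (polar T) (polar S).
Proof. intros ST x xs Px y ys Sy. apply Px, ST, Sy. Qed.

Lemma sub_polar_D (X : Banach) (S : op X) :
  pseudomonotone S -> op_sub S (polar_D S).
Proof.
  intros pmS x xs Sx. split; [exists xs; exact Sx|].
  intros y ys Sy. apply (proj1 (pseudomonotone_sim_p X S) pmS); assumption.
Qed.

Definition add_point {X : Banach} (S : op X) (x : X) (xs : dual X) : op X :=
  fun y ys => S y ys \/ (y = x /\ ys = xs).

Lemma pseudomonotone_add_point (X : Banach) (S : op X) x xs :
  pseudomonotone S -> polar S x xs -> pseudomonotone (add_point S x xs).
Proof.
  intros pmS Px. apply pseudomonotone_sim_p.
  intros a as_ b bs [Sa|[-> ->]] [Sb|[-> ->]].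
  - apply (proj1 (pseudomonotone_sim_p X S) pmS); assumption.
  - apply sim_p_sym, Px, Sa.
  - apply Px, Sb.
  - apply sim_p_refl.
Qed.

Lemma no_proper_pm_ext_same_domE (X : Banach) (S : op X) :
  pseudomonotone S -> no_proper_pm_ext_same_dom S <-> op_sub (polar_D S) S.
Proof.
  intros pmS. split.
  - intros maxS x xs [Dx Px].
    apply (maxS (add_point S x xs)); [apply pseudomonotone_add_point; auto
                                     | intros y ys Sy; left; exact Sy
                                     | | right; auto].
    intros y; split; [|intros [ys Sy]; exists ys; left; exact Sy].
    intros [ys [Sy|[-> _]]]; [exists ys; exact Sy|exact Dx].
  - intros polS S' pmS' SS' domS' x xs S'x. apply polS. split.
    + apply domS'. exists xs. exact S'x.
    + intros y ys Sy. apply (proj1 (pseudomonotone_sim_p X S') pmS'); auto.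
Qed.

Lemma cone_refl (X : Banach) (A : dual X -> Prop) xs : A xs -> cone A xs.
Proof. intros Axs. exists 1, xs. split; [lra|split; [exact Axs|intros; ring]]. Qed.

Lemma cone_pos_refl (X : Banach) (A : dual X -> Prop) xs : A xs -> cone_pos A xs.
Proof. intros Axs. exists 1, xs. split; [lra|split; [exact Axs|intros; ring]]. Qed.

Lemma cone_nonzero_pos (X : Banach) (A : dual X -> Prop) xs :
  ~ is_zero_dual xs -> cone A xs -> cone_pos A xs.
Proof.
  intros nz [t [v [Ht [Av Hv]]]].
  destruct (Req_dec t 0) as [->|t0].
  - exfalso. apply nz. intros z. rewrite Hv. ring.
  - exists t, v. repeat split; auto; lra.
Qed.

Lemma zero_in_Lset (X : Banach) (T : op X) x y :
  zeros T x -> Lset T y x.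
Proof.
  intros [z [Tz Zz]]. exists z. split; [exact Tz|]. rewrite Zz. lra.
Qed.

Lemma pseudomonotone_hat (X : Banach) (T : op X) :
  pseudomonotone T -> pseudomonotone (hat T).
Proof.
  intros pmT x xs y ys Hx Hy H.
  destruct Hy as [[Zy Ny] | [Dy [nZy [s [w [Hs [Tw Hw]]]]]]].
  - assert (Lyx : Lset T y x).
    { destruct Hx as [[Zx _]|[_ [_ [t [v [Ht [Tv Hv]]]]]]].
      - apply zero_in_Lset, Zx.
      - exists v. split; [exact Tv|]. rewrite Hv in H. nra. }
    specialize (Ny x Lyx). rewrite pair_vsubC in Ny. lra.
  - rewrite Hw. enough (0 <= pair (vsub y x) w) by nra.
    destruct Hx as [[[z [Tz Zz]] _]|[_ [_ [t [v [Ht [Tv Hv]]]]]]].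
    + apply (pmT x z y w Tz Tw). rewrite Zz. lra.
    + apply (pmT x v y w Tv Tw). rewrite Hv in H. nra.
Qed.

Lemma equivalent_hat (X : Banach) (T : op X) : equivalent T (hat T).
Proof.
  split; [|split].
  - intros x; split.
    + intros [xs Txs]. destruct (classic (zeros T x)) as [Zx|nZx].
      * pose proof Zx as [z [_ Zz]]. exists z. left. split; [exact Zx|].
        intros y _. rewrite Zz. lra.
      * exists xs. right. repeat split; [exists xs; exact Txs|exact nZx|].
        apply cone_pos_refl, Txs.
    + intros [xs [[[z [Tz _]] _]|[Dx _]]]; [exists z; exact Tz|exact Dx].
  - intros x; split.
    + intros Zx. pose proof Zx as [z [_ Zz]]. exists z. split; [|exact Zz].
      left. split; [exact Zx|]. intros y _. rewrite Zz. lra.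
    + intros [xs [[[Zx _]|[_ [nZx [t [v [Ht [Tv Hv]]]]]]] Zxs]]; [exact Zx|].
      exfalso. apply nZx. exists v. split; [exact Tv|]. intros y.
      specialize (Zxs y). rewrite Hv in Zxs.
      destruct (Rmult_integral _ _ Zxs); [lra|assumption].
  - intros x Dx nZx ys; split.
    + intros [t [v [Ht [Tv Hv]]]]. exists t, v. repeat split; auto.
      right. repeat split; auto. apply cone_pos_refl, Tv.
    + intros [t [u [Ht [[[Zx _]|[_ [_ [s [w [Hs [Tw Hw]]]]]]] Hu]]]]; [contradiction|].
      exists (t * s), w. repeat split; auto; [nra|]. intros z. rewrite Hu, Hw. ring.
Qed.

Lemma equivalent_sub_hat (X : Banach) (T S : op X) :
  pseudomonotone S -> equivalent T S -> op_sub S (hat T).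
Proof.
  intros pmS [domTS [zerosTS coneTS]] x xs Sx.
  assert (Dx : dom T x) by (apply domTS; exists xs; exact Sx).
  destruct (classic (zeros T x)) as [Zx|nZx].
  - left. split; [exact Zx|]. intros y [ys [Tys Hys]].
    rewrite pair_vsubC. enough (0 <= pair (vsub x y) xs) by lra.
    destruct (classic (zeros T y)) as [Zy|nZy].
    + destruct (proj1 (zerosTS y) Zy) as [z [Sz Zz]].
      apply (pmS y z x xs Sz Sx). rewrite Zz. lra.
    + assert (nz : ~ is_zero_dual ys) by (intros Z; apply nZy; exists ys; auto).
      assert (Dy : dom T y) by (exists ys; exact Tys).
      destruct (cone_nonzero_pos X (S y) ys nz
                  (proj1 (coneTS y Dy nZy ys) (cone_refl X _ ys Tys)))
        as [t [w [Ht [Sw Hw]]]].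
      apply (pmS y w x xs Sw Sx). rewrite Hw in Hys. nra.
  - right. repeat split; [exact Dx|exact nZx|].
    assert (nz : ~ is_zero_dual xs) by (intros Z; apply nZx, zerosTS; exists xs; auto).
    apply (cone_nonzero_pos X (T x) xs nz).
    apply (coneTS x Dx nZx xs), cone_refl, Sx.
Qed.

Lemma D_maximal_pseudomonotoneE (X : Banach) (T : op X) :
  pseudomonotone T ->
  D_maximal_pseudomonotone T <-> op_sub (polar_D (hat T)) (hat T).
Proof.
  intros pmT. pose proof (pseudomonotone_hat X T pmT) as pm_hat.
  split.
  - intros [_ [S [pmS [eqTS maxS]]]] x xs [Dx Px].
    apply (equivalent_sub_hat X T S pmS eqTS).
    apply (proj1 (no_proper_pm_ext_same_domE X S pmS) maxS). split.
    + apply (proj1 eqTS), (proj1 (equivalent_hat X T)), Dx.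
    + apply (polar_antitone X S (hat T)); [apply equivalent_sub_hat|]; assumption.
  - intros polar_sub. split; [exact pmT|].
    exists (hat T). split; [exact pm_hat|split; [apply equivalent_hat|]].
    apply no_proper_pm_ext_same_domE; assumption.
Qed.

Theorem mainTheorem13 (X : Banach) (T : op X) :
  pseudomonotone T ->
  (D_maximal_pseudomonotone T <-> op_eq (hat T) (polar_D (hat T))).
Proof.
  intros pmT. rewrite D_maximal_pseudomonotoneE by exact pmT. split.
  - intros polar_sub x xs. split; [|apply polar_sub].
    apply sub_polar_D, pseudomonotone_hat, pmT.
  - intros hat_eq x xs. apply hat_eq.
Qed.
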